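(* Let $w\ge1$ and let $m_1,\dots,m_w$ and $l_1,\dots,l_w$ be positive integers with $m_i\ge 3$ for all $i$ and $l_i\le 3$ for all $i\ge 2$. For an integer $k\ge0$ put \[ L(m,l)=\sum_{\substack{k_1,\dots,k_w\ge0\\ k_1+\dots+k_w=k}}\ \prod_{i=1}^w (k_i+m_i)^{l_i-\frac72}. \] Then for every $\delta>0$ there is a constant $C_\delta$ (depending only on $\delta$) such that for all such data, \[ L(m,l)\le C_\delta^{\sum_i m_i}\,(1+\delta)^k\,(k+m_1)^{l_1-\frac72}. \] *)

From Stdlib Require Import Reals.
Open Scope R_scope.

(* Indices i = 1..w of the paper are shifted to i = 0..w-1 here. *)

Definition term (m l : nat -> nat) (i ki : nat) : R :=
  Rpower (INR (ki + m i)) (INR (l i) - 7/2).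

(* compsum w f k = sum over (k_0,...,k_{w-1}) in N^w with k_0+...+k_{w-1} = k
   of prod_{i<w} f i k_i.  Defined by recursion on w, splitting off the last
   coordinate k_{w} = j (0 <= j <= k). *)
Fixpoint compsum (w : nat) (f : nat -> nat -> R) (k : nat) : R :=
  match w with
  | O => if Nat.eqb k 0 then 1 else 0
  | S w' => sum_f_R0 (fun j => f w' j * compsum w' f (k - j)%nat) k
  end.

Definition Lsum (w : nat) (m l : nat -> nat) (k : nat) : R :=
  compsum w (term m l) k.

Fixpoint natsum (w : nat) (m : nat -> nat) : nat :=
  match w with
  | O => O
  | S w' => (natsum w' m + m w')%nat
  end.

(* Every factor other than the first is at most 1 (its exponent l_i - 7/2 is
   negative), so the coordinates can be peeled off one at a time.  Moving
   weight j away from the first coordinate costs at most a factor (1 + j)^3,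
   since its exponent is at least -5/2; this polynomial loss is absorbed by a
   geometric factor (1 + e)^(3j) still smaller than (1 + delta)^j, so each
   peeled coordinate costs only the sum of a convergent geometric series. *)

From Stdlib Require Import Reals Lra Lia.
Open Scope R_scope.

Lemma Rpower_pos (x a : R) : 0 < Rpower x a.
Proof. apply exp_pos. Qed.

Lemma Rpower_le_1 (x a : R) : 1 <= x -> a <= 0 -> Rpower x a <= 1.
Proof.
  intros Hx Ha. rewrite <- (Rpower_O x) by lra. now apply Rle_Rpower.
Qed.

Lemma Rpower_le_shift (X Y c a : R) (p : nat) :
  0 < Y -> Y <= X <= Y * c -> 1 <= c -> - INR p <= a ->
  Rpower Y a <= Rpower X a * c ^ p.
Proof.
  intros HY [HYX HXc] Hc Hp.
  assert (HX := Rpower_pos X a).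
  destruct (Rle_or_lt 0 a) as [Ha | Ha].
  - assert (Rpower Y a <= Rpower X a) by (apply Rle_Rpower_l; lra).
    assert (1 <= c ^ p) by now apply pow_R1_Rle.
    nra.
  - assert (Hsplit : Rpower Y a = Rpower (Y * c) a * Rpower c (- a)).
    { rewrite <- Rpower_mult_distr by lra.
      rewrite Rmult_assoc, <- Rpower_plus, Rplus_opp_r, Rpower_O by lra. ring. }
    assert (HYc : Rpower (Y * c) a <= Rpower X a).
    { rewrite <- (Ropp_involutive a), (Rpower_Ropp (Y * c)), (Rpower_Ropp X).
      apply Rinv_le_contravar; [apply Rpower_pos |].
      apply Rle_Rpower_l; lra. }
    assert (Hcp : Rpower c (- a) <= c ^ p).
    { rewrite <- Rpower_pow by lra. apply Rle_Rpower; lra. }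
    rewrite Hsplit.
    apply Rmult_le_compat; auto; left; apply Rpower_pos.
Qed.

Lemma pow_poly_le_geometric (e : R) (p j : nat) :
  0 < e <= 1 -> (1 + INR j) ^ p <= / e ^ p * ((1 + e) ^ p) ^ j.
Proof.
  intros He.
  assert (Hj := pos_INR j).
  assert (Hbern : (1 + INR j) * e <= (1 + e) ^ j).
  { apply Rle_trans with (1 + INR j * e); [nra | now apply poly]. }
  assert (Hep : 0 < e ^ p) by (apply pow_lt; lra).
  rewrite <- pow_mult, Nat.mul_comm, pow_mult.
  apply Rmult_le_reg_l with (e ^ p); auto.
  rewrite <- Rmult_assoc, Rinv_r, Rmult_1_l, <- Rpow_mult_distr by lra.
  rewrite Rmult_comm. apply pow_incr. nra.
Qed.

Lemma sum_geometric_le (x : R) (N : nat) :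
  0 <= x < 1 -> sum_f_R0 (fun i => x ^ i) N <= / (1 - x).
Proof.
  intros Hx. rewrite tech3 by lra.
  assert (0 <= x ^ S N) by (apply pow_le; lra).
  unfold Rdiv. rewrite <- (Rmult_1_l (/ (1 - x))) at 2.
  apply Rmult_le_compat_r; [left; apply Rinv_0_lt_compat |]; lra.
Qed.

Lemma compsum_nonneg (w : nat) (f : nat -> nat -> R) (k : nat) :
  (forall i j, 0 <= f i j) -> 0 <= compsum w f k.
Proof.
  revert f k; induction w as [| w IH]; intros f k Hf; simpl.
  - destruct (Nat.eqb k 0); lra.
  - apply cond_pos_sum. intros j. apply Rmult_le_pos; auto.
Qed.

Lemma compsum_1 (f : nat -> nat -> R) (k : nat) : compsum 1 f k = f 0%nat k.
Proof.
  destruct k as [| k]; cbn [compsum]; [simpl; ring |].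
  rewrite tech5, Nat.sub_diag, sum_eq_R0.
  - simpl. ring.
  - intros j Hj. replace (S k - j)%nat with (S (k - j)) by lia. simpl. ring.
Qed.

Lemma natsum_ge (w : nat) (m : nat -> nat) :
  (forall i, (i < w)%nat -> (1 <= m i)%nat) -> (w <= natsum w m)%nat.
Proof.
  induction w as [| w IH]; intros Hm; simpl; [lia |].
  assert (w <= natsum w m)%nat by (apply IH; intros i Hi; apply Hm; lia).
  specialize (Hm w ltac:(lia)). lia.
Qed.

Section FirstFactorDominates.

Variable f : nat -> nat -> R.
Variables q r B D : R.

Hypothesis f_nonneg : forall i j, 0 <= f i j.
Hypothesis q_ge1 : 1 <= q.
Hypothesis r_range : 0 <= r < q.
Hypothesis B_nonneg : 0 <= B.
Hypothesis f0_shift : forall k j, (j <= k)%nat -> f 0%nat (k - j) <= B * r ^ j * f 0%nat k.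
Hypothesis D_ge1 : 1 <= D.
Hypothesis D_ge_series : B / (1 - r / q) <= D.

Lemma ratio_range : 0 <= r / q < 1.
Proof.
  assert (r / q * q = r) by (field; lra).
  assert (0 <= r / q) by (apply Rmult_le_pos; [| left; apply Rinv_0_lt_compat]; lra).
  split; nra.
Qed.

Lemma shifted_first_factor_le (k j : nat) : (j <= k)%nat ->
  q ^ (k - j) * f 0%nat (k - j) <= B * f 0%nat k * q ^ k * (r / q) ^ j.
Proof.
  intros Hj.
  assert (Hqr : q ^ (k - j) * r ^ j = q ^ k * (r / q) ^ j).
  { replace r with (r / q * q) at 1 by (field; lra).
    replace k with (k - j + j)%nat at 2 by lia.
    rewrite Rpow_mult_distr, pow_add. ring. }
  apply Rle_trans with (q ^ (k - j) * (B * r ^ j * f 0%nat k)).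
  - apply Rmult_le_compat_l; [apply pow_le; lra | now apply f0_shift].
  - replace (B * f 0%nat k * q ^ k * (r / q) ^ j)
      with (B * f 0%nat k * (q ^ (k - j) * r ^ j)) by (rewrite Hqr; ring).
    right; ring.
Qed.

Lemma compsum_le_first_factor (n : nat) :
  (forall i j, (1 <= i <= n)%nat -> f i j <= 1) ->
  forall k, compsum (S n) f k <= D ^ n * q ^ k * f 0%nat k.
Proof.
  induction n as [| n IH]; intros Hf1 k.
  - rewrite compsum_1. simpl.
    assert (1 <= q ^ k) by now apply pow_R1_Rle.
    specialize (f_nonneg 0%nat k). nra.
  - set (c := D ^ n * (B * f 0%nat k * q ^ k)).
    assert (HDn : 0 <= D ^ n) by (apply pow_le; lra).
    assert (Hc : 0 <= c).
    { unfold c. repeat apply Rmult_le_pos; auto. apply pow_le; lra. }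
    assert (Hterm : forall j, (j <= k)%nat ->
              f (S n) j * compsum (S n) f (k - j) <= (r / q) ^ j * c).
    { intros j Hj.
      assert (f (S n) j <= 1) by (apply Hf1; lia).
      assert (compsum (S n) f (k - j) <= D ^ n * q ^ (k - j) * f 0%nat (k - j))
        by (apply IH; intros i j' Hi; apply Hf1; lia).
      assert (0 <= compsum (S n) f (k - j)) by now apply compsum_nonneg.
      assert (Hshift := shifted_first_factor_le k j Hj).
      specialize (f_nonneg (S n) j).
      apply Rle_trans with (D ^ n * (q ^ (k - j) * f 0%nat (k - j))); [nra |].
      unfold c. rewrite (Rmult_comm ((r / q) ^ j)), Rmult_assoc.
      now apply Rmult_le_compat_l. }
    cbn [compsum].
    apply Rle_trans with (sum_f_R0 (fun j => (r / q) ^ j * c) k); [now apply sum_Rle |].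
    rewrite <- scal_sum.
    apply Rle_trans with (c * / (1 - r / q)).
    { apply Rmult_le_compat_l; auto. apply sum_geometric_le, ratio_range. }
    unfold c. simpl pow.
    replace (D ^ n * (B * f 0%nat k * q ^ k) * / (1 - r / q))
      with (D ^ n * q ^ k * f 0%nat k * (B / (1 - r / q))) by (unfold Rdiv; ring).
    replace (D * D ^ n * q ^ k * f 0%nat k) with (D ^ n * q ^ k * f 0%nat k * D) by ring.
    apply Rmult_le_compat_l; auto.
    repeat apply Rmult_le_pos; auto. apply pow_le; lra.
Qed.

End FirstFactorDominates.

Lemma exists_cube_lt (delta : R) :
  0 < delta -> exists e, 0 < e <= 1 /\ (1 + e) ^ 3 < 1 + delta.
Proof.
  intros Hd. exists (Rmin delta 1 / 8).
  assert (Rmin delta 1 <= delta) by apply Rmin_l.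
  assert (Rmin delta 1 <= 1) by apply Rmin_r.
  assert (0 < Rmin delta 1) by (apply Rmin_glb_lt; lra).
  simpl. split; [lra | nra].
Qed.

Lemma term_shift (m l : nat -> nat) (k j : nat) :
  (j <= k)%nat -> (1 <= m 0%nat)%nat -> (1 <= l 0%nat)%nat ->
  term m l 0 (k - j) <= term m l 0 k * (1 + INR j) ^ 3.
Proof.
  intros Hjk Hm Hl. unfold term.
  apply Rpower_le_shift.
  - apply lt_0_INR. lia.
  - split; [apply le_INR; lia |].
    replace (k + m 0%nat)%nat with (k - j + m 0%nat + j)%nat by lia.
    rewrite plus_INR.
    assert (1 <= INR (k - j + m 0%nat)) by (apply (le_INR 1); lia).
    assert (Hj := pos_INR j). nra.
  - assert (Hj := pos_INR j). lra.
  - apply (le_INR 1) in Hl. simpl in *. lra.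
Qed.

Lemma Lsum_le_first_factor (e delta : R) (n : nat) (m l : nat -> nat) (k : nat) :
  0 <= delta -> 0 < e <= 1 -> (1 + e) ^ 3 < 1 + delta ->
  (forall i, (i <= n)%nat -> (1 <= m i)%nat) ->
  (1 <= l 0%nat)%nat ->
  (forall i, (1 <= i <= n)%nat -> (l i <= 3)%nat) ->
  Lsum (S n) m l k <=
    Rmax 1 (/ e ^ 3 / (1 - (1 + e) ^ 3 / (1 + delta))) ^ n * (1 + delta) ^ k
    * term m l 0 k.
Proof.
  intros Hd He Hr Hm Hl0 Hl3.
  assert (HB : 0 <= / e ^ 3) by (left; apply Rinv_0_lt_compat, pow_lt; lra).
  apply compsum_le_first_factor with (r := (1 + e) ^ 3) (B := / e ^ 3).
  - intros i j. left; apply Rpower_pos.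
  - lra.
  - split; [apply pow_le |]; lra.
  - exact HB.
  - intros k' j Hj.
    apply Rle_trans with (term m l 0 k' * (1 + INR j) ^ 3).
    + apply term_shift; [lia | apply Hm; lia | exact Hl0].
    + rewrite (Rmult_comm _ (term m l 0 k')).
      apply Rmult_le_compat_l; [left; apply Rpower_pos |].
      now apply pow_poly_le_geometric.
  - apply Rmax_l.
  - apply Rmax_r.
  - intros i j Hi. apply Rpower_le_1.
    + apply (le_INR 1). specialize (Hm i ltac:(lia)). lia.
    + assert (Hli := le_INR _ _ (Hl3 i Hi)). simpl in Hli. lra.
Qed.

Theorem proposition4p18 :
  forall delta : R, 0 < delta ->
  exists C : R,
    forall (w : nat) (m l : nat -> nat) (k : nat),
      (1 <= w)%nat ->
      (forall i, (i < w)%nat -> (3 <= m i)%nat) ->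
      (forall i, (i < w)%nat -> (1 <= l i)%nat) ->
      (forall i, (1 <= i < w)%nat -> (l i <= 3)%nat) ->
      Lsum w m l k <=
        C ^ (natsum w m) * (1 + delta) ^ k
        * Rpower (INR (k + m 0%nat)) (INR (l 0%nat) - 7/2).
Proof.
  intros delta Hd.
  destruct (exists_cube_lt delta Hd) as [e [He Hr]].
  set (C := Rmax 1 (/ e ^ 3 / (1 - (1 + e) ^ 3 / (1 + delta)))).
  exists C. intros w m l k Hw Hm Hl Hl3.
  destruct w as [| n]; [lia |].
  apply Rle_trans with (C ^ n * (1 + delta) ^ k * term m l 0 k).
  { apply Lsum_le_first_factor; [lra | exact He | exact Hr | ..].
    - intros i Hi. specialize (Hm i ltac:(lia)). lia.
    - apply Hl. lia.
    - intros i Hi. apply Hl3. lia. }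
  assert (Hn : (n <= natsum (S n) m)%nat).
  { assert (Hsum := natsum_ge (S n) m). simpl in Hsum |- *.
    enough (S n <= natsum n m + m n)%nat by lia.
    apply Hsum. intros i Hi. specialize (Hm i Hi). lia. }
  apply Rmult_le_compat_r; [left; apply Rpower_pos |].
  apply Rmult_le_compat_r; [apply pow_le; lra |].
  apply Rle_pow; [apply Rmax_l | exact Hn].
Qed.
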